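(* Let $d\ge1$ and $x,y,u,v\in\mathbb{R}^d_{>0}$, and set $a^\pm:=s^\pm(x,y)$, $b^\pm:=s^\pm(u,v)$. Assume that $\frac{y_i}{x_i}\in\{a^-,a^+\}$ and $\frac{v_i}{u_i}\in\{b^-,b^+\}$ for all $1\le i\le d$. Then there exist $x',y',u',v'\in\mathbb{R}^2_{>0}$ such that \[ s^\pm(x',y')=a^\pm,\qquad s^\pm(u',v')=b^\pm,\qquad F_2(x',y';u',v')\ge F_d(x,y;u,v). \]
   Context: For $x,y\in\mathbb{R}^d_{>0}$ define $s^+(x,y)=\max_i \frac{y_i}{x_i}$ and $s^-(x,y)=\min_i\frac{y_i}{x_i}$. Define $F_d:(\mathbb{R}^d_{>0})^4\to\mathbb{R}_{>0}$ by $F_d(x,y;u,v)=\frac{(x\cdot u)(y\cdot v)}{(x\cdot v)(y\cdot u)}$, where $\cdot$ is the standard Euclidean dot product; $F_2$ is the case $d=2$. *)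

From mathcomp Require Import all_boot all_order all_algebra.
Set Implicit Arguments. Unset Strict Implicit. Unset Printing Implicit Defensive.
Import Order.TTheory GRing.Theory Num.Theory.
Local Open Scope ring_scope.

(* Vectors in R^n are functions 'I_n -> R.  Dimension d >= 1 is encoded
   as n.+1 so that max/min over the index set is well defined. *)

Definition splus (R : realFieldType) (n : nat) (x y : 'I_n.+1 -> R) : R :=
  \big[Num.max/(y ord0 / x ord0)]_(i < n.+1) (y i / x i).

Definition sminus (R : realFieldType) (n : nat) (x y : 'I_n.+1 -> R) : R :=
  \big[Num.min/(y ord0 / x ord0)]_(i < n.+1) (y i / x i).

Definition dotp (R : realFieldType) (n : nat) (x y : 'I_n -> R) : R :=
  \sum_(i < n) x i * y i.

Definition Fd (R : realFieldType) (n : nat) (x y u v : 'I_n -> R) : R :=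
  (dotp x u * dotp y v) / (dotp x v * dotp y u).

Definition posvec (R : realFieldType) (n : nat) (x : 'I_n -> R) : Prop :=
  forall i, 0 < x i.

From mathcomp Require Import all_boot all_order all_algebra.
From mathcomp Require Import ring.

Set Implicit Arguments.
Unset Strict Implicit.
Unset Printing Implicit Defensive.
Import Order.TTheory GRing.Theory Num.Theory.
Local Open Scope ring_scope.

(* With w_i = x_i u_i, α_i = y_i/x_i and β_i = v_i/u_i,
   F_d = (Σ w)(Σ αβ w) / ((Σ β w)(Σ α w)).  Bilinear interpolation writes
   each (α_i, β_i) in [a-, a+] × [b-, b+] as a combination of the four
   corners of the rectangle; summed against w, the weight of a corner is, up
   to sign and the factor D = (a+ - a-)(b+ - b-), the dot product
   (a' x - y)·(b' u - v) where (a', b') is the opposite corner.  Keeping only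
   the diagonal corners (a-, b-) and (a+, b+), with their weights, gives a
   two-dimensional configuration with the same extreme ratios, and a
   polynomial identity shows that F_2 does not decrease.  If F_d <= 1 (in
   particular if D = 0) any diagonal configuration does, since its F_2 is at
   least 1. *)

Section TwoPointConfiguration.
Variable R : realFieldType.
Implicit Types am ap bm bp S P Q T : R.

(* F_2 of x' = (1, 1), y' = (am, ap), u' = (w1, w2), v' = (bm w1, bp w2). *)
Definition F2val am ap bm bp (w1 w2 : R) :=
  (w1 + w2) * (am * bm * w1 + ap * bp * w2) /
  ((bm * w1 + bp * w2) * (am * w1 + ap * w2)).

Definition pair2 (a b : R) : 'I_2 -> R := fun i => if i == ord0 then a else b.

Lemma pair2_realization am ap bm bp (w1 w2 : R) :
  0 < am <= ap -> 0 < bm <= bp -> 0 < w1 -> 0 < w2 ->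
  exists x' y' u' v' : 'I_2 -> R,
    (posvec x' /\ posvec y' /\ posvec u' /\ posvec v') /\
    (splus x' y' = ap /\ sminus x' y' = am) /\
    (splus u' v' = bp /\ sminus u' v' = bm) /\
    Fd x' y' u' v' = F2val am ap bm bp w1 w2.
Proof.
move=> /andP[am_gt0 am_le] /andP[bm_gt0 bm_le] w1_gt0 w2_gt0.
have ap_gt0 := lt_le_trans am_gt0 am_le.
have bp_gt0 := lt_le_trans bm_gt0 bm_le.
exists (pair2 1 1), (pair2 am ap), (pair2 w1 w2), (pair2 (bm * w1) (bp * w2)).
rewrite /splus /sminus /Fd /dotp /pair2 !big_ord_recl !big_ord0 /=.
rewrite !divr1 !mulfK ?gt_eqF // (max_l am_le) (max_r am_le) (min_r am_le).
rewrite (max_l bm_le) (max_r bm_le) (min_r bm_le) !minxx.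
split; first by split; [|split; [|split]] => i; case: ifP; rewrite ?mulr_gt0.
do 2!split => //; rewrite /F2val; congr (_ / (_ * _)); ring.
Qed.

Lemma F2val_ge1 am ap bm bp (w1 w2 : R) :
  0 < am <= ap -> 0 < bm <= bp -> 0 < w1 -> 0 < w2 ->
  1 <= F2val am ap bm bp w1 w2.
Proof.
move=> /andP[am_gt0 am_le] /andP[bm_gt0 bm_le] w1_gt0 w2_gt0.
have ap_gt0 := lt_le_trans am_gt0 am_le.
have bp_gt0 := lt_le_trans bm_gt0 bm_le.
rewrite /F2val ler_pdivlMr; last by rewrite mulr_gt0 // addr_gt0 // mulr_gt0.
rewrite mul1r -subr_ge0.
have -> : (w1 + w2) * (am * bm * w1 + ap * bp * w2) -
    (bm * w1 + bp * w2) * (am * w1 + ap * w2) =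
    (ap - am) * (bp - bm) * (w1 * w2) by ring.
by rewrite !mulr_ge0 ?subr_ge0 // ltW.
Qed.

(* For S = x·u, P = y·u, Q = x·v, T = y·v this is (a x - y)·(b u - v). *)
Definition corner a b S P Q T := a * b * S - b * P - a * Q + T.

Lemma corner_det am ap bm bp S P Q T :
  corner ap bp S P Q T * corner am bm S P Q T
    - corner ap bm S P Q T * corner am bp S P Q T
  = (ap - am) * (bp - bm) * (S * T - Q * P).
Proof. by rewrite /corner; ring. Qed.

Lemma le_F2val_corner am ap bm bp S P Q T :
  0 < am <= ap -> 0 < bm <= bp -> 0 < P -> 0 < Q ->
  0 < (ap - am) * (bp - bm) ->
  0 < corner ap bp S P Q T -> 0 < corner am bm S P Q T ->
  corner ap bm S P Q T <= 0 -> corner am bp S P Q T <= 0 ->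
  S * T / (Q * P) <=
    F2val am ap bm bp (corner ap bp S P Q T) (corner am bm S P Q T).
Proof.
move=> /andP[am_gt0 am_le] /andP[bm_gt0 bm_le] P_gt0 Q_gt0 D_gt0.
have ap_gt0 := lt_le_trans am_gt0 am_le.
have bp_gt0 := lt_le_trans bm_gt0 bm_le.
pose l1 := corner ap bp S P Q T; pose l4 := corner am bm S P Q T.
pose l2 := - corner ap bm S P Q T; pose l3 := - corner am bp S P Q T.
rewrite -/l1 -/l4 => l1_gt0 l4_gt0 c2_le0 c3_le0.
have l2_ge0 : 0 <= l2 by rewrite oppr_ge0.
have l3_ge0 : 0 <= l3 by rewrite oppr_ge0.
pose Q' := bm * l1 + bp * l4; pose P' := am * l1 + ap * l4.
have Q'_gt0 : 0 < Q' by rewrite addr_gt0 ?mulr_gt0.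
have P'_gt0 : 0 < P' by rewrite addr_gt0 ?mulr_gt0.
rewrite /F2val -/Q' -/P' -subr_ge0.
pose E := (l1 + l4) * (am * bm * l1 + ap * bp * l4) * (Q * P)
          - S * T * (Q' * P').
have -> : (l1 + l4) * (am * bm * l1 + ap * bp * l4) / (Q' * P') - S * T / (Q * P)
    = E / (Q * P * (Q' * P')).
  by rewrite /E; field; rewrite !gt_eqF.
apply: divr_ge0; last by rewrite ltW // !mulr_gt0.
(* D E is a polynomial in nonnegative quantities with nonnegative coefficients. *)
pose G := l1 * l4 * ((am * l2 + ap * l3) * (bm * (l1 + l3) + bp * (l2 + l4))
            + P' * (bm * l3 + bp * l2)) + l2 * l3 * P' * Q'.
have DE : (ap - am) * (bp - bm) * E = G.
  by rewrite /E /G /Q' /P' /l1 /l2 /l3 /l4 /corner; ring.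
rewrite -(pmulr_rge0 _ D_gt0) DE /G.
clearbody l1 l2 l3 l4 Q' P'.
have := ltW l1_gt0; have := ltW l4_gt0; have := ltW P'_gt0; have := ltW Q'_gt0.
by move=> *; rewrite !(addr_ge0, mulr_ge0) // ltW.
Qed.

End TwoPointConfiguration.

Section RatioBounds.
Variables (R : realFieldType) (n : nat) (x y : 'I_n.+1 -> R).
Hypotheses (x_pos : posvec x) (y_pos : posvec y).

Lemma sminus_gt0 : 0 < sminus x y.
Proof. by apply: lt_bigmin => [|i _]; rewrite divr_gt0. Qed.

Lemma sminus_le_splus : sminus x y <= splus x y.
Proof. exact: le_trans (bigmin_le _ ord0 _) (le_bigmax _ _ ord0). Qed.

Lemma sminus_range : 0 < sminus x y <= splus x y.
Proof. by rewrite sminus_gt0 sminus_le_splus. Qed.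

Lemma sminus_mul_le i : sminus x y * x i <= y i.
Proof. by rewrite -ler_pdivlMr // bigmin_le. Qed.

Lemma le_splus_mul i : y i <= splus x y * x i.
Proof. by rewrite -ler_pdivrMr // le_bigmax. Qed.

Lemma proportional_of_sminus_eq_splus :
  sminus x y = splus x y -> forall i, y i = sminus x y * x i.
Proof.
move=> eq_ms i; apply/eqP.
by rewrite eq_le sminus_mul_le andbT eq_ms le_splus_mul.
Qed.

End RatioBounds.

Section DotProduct.
Variables (R : realFieldType) (n : nat).
Implicit Types x y u v : 'I_n -> R.

Lemma dotp_gt0 (x y : 'I_n.+1 -> R) : posvec x -> posvec y -> 0 < dotp x y.
Proof.
move=> x_pos y_pos; rewrite /dotp big_ord_recl ltr_wpDr ?mulr_gt0 //.
by apply: sumr_ge0 => i _; rewrite ltW ?mulr_gt0.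
Qed.

Lemma dotp_scalel (c : R) x y u :
  (forall i, y i = c * x i) -> dotp y u = c * dotp x u.
Proof.
by move=> ey; rewrite /dotp mulr_sumr; apply: eq_bigr => i _; rewrite ey mulrA.
Qed.

Lemma dotp_scaler (c : R) x u v :
  (forall i, v i = c * u i) -> dotp x v = c * dotp x u.
Proof.
by move=> ev; rewrite /dotp mulr_sumr; apply: eq_bigr => i _; rewrite ev mulrCA.
Qed.

Lemma corner_dotp (a b : R) x y u v :
  corner a b (dotp x u) (dotp y u) (dotp x v) (dotp y v) =
  dotp (fun i => a * x i - y i) (fun i => b * u i - v i).
Proof.
rewrite /corner /dotp !mulr_sumr -!sumrN -!big_split /=.
by apply: eq_bigr => i _; ring.
Qed.

End DotProduct.

Section Reduction.
Variables (R : realFieldType) (n : nat) (x y u v : 'I_n.+1 -> R).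
Hypotheses (x_pos : posvec x) (y_pos : posvec y).
Hypotheses (u_pos : posvec u) (v_pos : posvec v).

Let am := sminus x y.
Let ap := splus x y.
Let bm := sminus u v.
Let bp := splus u v.
Let cw a b := corner a b (dotp x u) (dotp y u) (dotp x v) (dotp y v).

Lemma Fd_le_F2val : exists w1 w2,
  0 < w1 /\ 0 < w2 /\ Fd x y u v <= F2val am ap bm bp w1 w2.
Proof.
have a_bounds : 0 < am <= ap by exact: sminus_range.
have b_bounds : 0 < bm <= bp by exact: sminus_range.
have QP_gt0 : 0 < dotp x v * dotp y u by rewrite mulr_gt0 ?dotp_gt0.
have [F_le1 | F_gt1] := lerP (dotp x u * dotp y v) (dotp x v * dotp y u).
  exists 1, 1; do 2!split => //.
  apply: le_trans (F2val_ge1 a_bounds b_bounds ltr01 ltr01).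
  by rewrite /Fd ler_pdivrMr ?mul1r.
have D_gt0 : 0 < (ap - am) * (bp - bm).
  rewrite lt_def mulf_eq0 !subr_eq0 mulr_ge0 ?subr_ge0 ?sminus_le_splus // andbT.
  apply: contraTN F_gt1 => D_eq0.
  suff -> : dotp x u * dotp y v = dotp x v * dotp y u by rewrite ltxx.
  case/orP: D_eq0 => /eqP e.
  - have ey := proportional_of_sminus_eq_splus x_pos (esym e).
    by rewrite (dotp_scalel _ ey) (dotp_scalel _ ey); ring.
  - have ev := proportional_of_sminus_eq_splus u_pos (esym e).
    by rewrite (dotp_scaler _ ev) (dotp_scaler _ ev); ring.
have xp i : 0 <= ap * x i - y i by rewrite subr_ge0 le_splus_mul.
have xm i : am * x i - y i <= 0 by rewrite subr_le0 sminus_mul_le.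
have up i : 0 <= bp * u i - v i by rewrite subr_ge0 le_splus_mul.
have um i : bm * u i - v i <= 0 by rewrite subr_le0 sminus_mul_le.
have cpp : 0 <= cw ap bp.
  by rewrite /cw corner_dotp sumr_ge0 // => i _; rewrite mulr_ge0.
have cmm : 0 <= cw am bm.
  by rewrite /cw corner_dotp sumr_ge0 // => i _; rewrite mulr_le0.
have cpm : cw ap bm <= 0.
  by rewrite /cw corner_dotp sumr_le0 // => i _; rewrite mulr_ge0_le0.
have cmp : cw am bp <= 0.
  by rewrite /cw corner_dotp sumr_le0 // => i _; rewrite mulr_le0_ge0.
have prod_gt0 : 0 < cw ap bp * cw am bm.
  rewrite -[_ * cw am bm](subrK (cw ap bm * cw am bp)) /cw corner_det.
  by rewrite ltr_wpDr ?mulr_le0 // mulr_gt0 // subr_gt0.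
have cpp_gt0 : 0 < cw ap bp.
  rewrite lt_def cpp andbT; apply: contraTneq prod_gt0 => ->.
  by rewrite mul0r ltxx.
have cmm_gt0 : 0 < cw am bm.
  rewrite lt_def cmm andbT; apply: contraTneq prod_gt0 => ->.
  by rewrite mulr0 ltxx.
exists (cw ap bp), (cw am bm); do 2!split => //.
by apply: le_F2val_corner; rewrite ?dotp_gt0.
Qed.

End Reduction.

Theorem mainTheorem7 (R : realFieldType) (n : nat)
  (x y u v : 'I_n.+1 -> R) :
  posvec x -> posvec y -> posvec u -> posvec v ->
  (forall i, y i / x i = sminus x y \/ y i / x i = splus x y) ->
  (forall i, v i / u i = sminus u v \/ v i / u i = splus u v) ->
  exists x' y' u' v' : 'I_2 -> R,
    (posvec x' /\ posvec y' /\ posvec u' /\ posvec v') /\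
    (splus x' y' = splus x y /\ sminus x' y' = sminus x y) /\
    (splus u' v' = splus u v /\ sminus u' v' = sminus u v) /\
    Fd x' y' u' v' >= Fd x y u v.
Proof.
move=> x_pos y_pos u_pos v_pos _ _.
have [w1 [w2 [w1_gt0 [w2_gt0 F_le]]]] := Fd_le_F2val x_pos y_pos u_pos v_pos.
have [x' [y' [u' [v' [pos [ratios_xy [ratios_uv eq_F]]]]]]] :=
  pair2_realization (sminus_range x_pos y_pos) (sminus_range u_pos v_pos)
    w1_gt0 w2_gt0.
by exists x', y', u', v'; rewrite eq_F.
Qed.
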